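(* A rooted labeled forest that avoids $123$ avoids $2413$ if and only if it is a $P_1$-forest.
   Context: Rooted labeled forests are unordered forests with a distinguished root in each component and distinct integer labels $L(v)$. The ancestors of $v$ are the vertices on the path from the root of its component to $v$ (including $v$). An instance of a pattern $\pi$ of length $k$ is a sequence $v_1,\dots,v_k$ with $v_i$ a strict ancestor of $v_{i+1}$ and labels in the same relative order as $\pi$; a forest avoids $\pi$ if it has no instance. A vertex $v$ is a top-down minimum (TDM) if $L(u)\ge L(v)$ for every ancestor $u$ of $v$; other vertices are non-TDM. A non-TDM vertex $v$ is special if the path from the root to $v$ contains vertices $v_1,v_2,v_3,v_4$ in that order (not necessarily consecutive) with $v_1,v_3$ TDM and $v_2,v_4$ non-TDM. The ceiling of a special vertex $v$ is its lowest ancestor $u$ such that the path from $u$ to $v$ contains vertices $v_1,v_2,v_3,v_4$ in that order with $v_1,v_3$ TDM and $v_2,v_4$ non-TDM. A $P_1$-forest is a forest in which every special vertex $v$ with ceiling $u$ satisfies $L(u)>L(v)$. *)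

From mathcomp Require Import all_boot all_order all_algebra.
Set Implicit Arguments. Unset Strict Implicit. Unset Printing Implicit Defensive.
Import Order.TTheory GRing.Theory Num.Theory.

(* A rooted forest on a finite vertex type T is given by a parent map:
   parent v = None iff v is a root.  Labels L : T -> int (distinct). *)
Section Forest.
Variables (T : finType) (parent : T -> option T) (L : T -> int).

Fixpoint piter (k : nat) (v : T) : option T :=
  match k with
  | 0 => Some v
  | k'.+1 => if piter k' v is Some w then parent w else None
  end.

(* the parent map has no cycles: every vertex reaches a root *)
Definition is_forest : Prop := forall v, piter #|T| v = None.

Definition anc (u v : T) : Prop := exists k, piter k v = Some u.
Definition sanc (u v : T) : Prop := exists k, piter k.+1 v = Some u.

Definition contains (pi : seq nat) : Prop :=
  exists f : nat -> T,
    (forall i, i.+1 < size pi -> sanc (f i) (f i.+1)) /\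
    (forall i j, i < size pi -> j < size pi ->
       ((L (f i) < L (f j))%R = (nth 0 pi i < nth 0 pi j))).

Definition avoids (pi : seq nat) : Prop := ~ contains pi.

Definition TDM (v : T) : Prop := forall u, anc u v -> (L v <= L u)%R.

Definition has_pat (u v : T) : Prop :=
  exists v1 v2 v3 v4, [/\ anc u v1, sanc v1 v2, sanc v2 v3, sanc v3 v4
     & anc v4 v] /\ [/\ TDM v1, ~ TDM v2, TDM v3 & ~ TDM v4].

(* special vertex: non-TDM, and the root-to-v path contains the pattern
   (equivalently, some ancestor of v, e.g. the root, satisfies has_pat) *)
Definition special (v : T) : Prop :=
  ~ TDM v /\ exists v1 v2 v3 v4,
    [/\ sanc v1 v2, sanc v2 v3, sanc v3 v4 & anc v4 v] /\
    [/\ TDM v1, ~ TDM v2, TDM v3 & ~ TDM v4].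

Definition ceiling (u v : T) : Prop :=
  anc u v /\ has_pat u v /\ (forall w, sanc u w -> anc w v -> ~ has_pat w v).

Definition P1_forest : Prop :=
  forall u v, special v -> ceiling u v -> (L v < L u)%R.

End Forest.

From mathcomp Require Import all_boot all_order all_algebra.
From mathcomp Require Import zify.
From Stdlib Require Import Classical.
Set Implicit Arguments. Unset Strict Implicit. Unset Printing Implicit Defensive.
Import Order.TTheory GRing.Theory Num.Theory.

(* In a 123-avoiding forest every label below a non-TDM vertex is smaller than
   the label of that vertex.  If [u] is the ceiling of [v], with witnesses
   [v1, v2, v3, v4], then [L v3 < L u] because [v3] is TDM and [L v < L v2]
   because [v2] is not, so [L u < L v] would make [u, v2, v3, v] an instance of
   2413.  Conversely, in an instance [a, b, c, d] of 2413, avoidance of 123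
   forces [a] and [c] to be TDM and [b] and [d] not to be, so [d] is special;
   its ceiling [u] is a TDM vertex weakly below [a], hence
   [L d < L u <= L a < L d] under the P1 condition. *)

Section Forest.
Variables (T : finType) (parent : T -> option T).
Hypothesis forest : is_forest parent.

Local Notation piter := (piter parent).
Local Notation anc := (anc parent).
Local Notation sanc := (sanc parent).

Lemma piterD i j v : piter (i + j) v = obind (piter i) (piter j v).
Proof. by elim: i => [|i IH] /=; [case: (piter j v) | rewrite IH; case: (piter j v)]. Qed.

Lemma piter_acyclic k v : piter k.+1 v <> Some v.
Proof.
move=> cyc.
have iter_cyc n : piter (n * k.+1) v = Some v.
  by elim: n => [|n IH] //; rewrite mulSn piterD IH.
have := iter_cyc #|T|.
by rewrite mulnS addnC piterD forest.
Qed.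

Lemma piter_depth_inj i j v u : piter i v = Some u -> piter j v = Some u -> i = j.
Proof.
wlog le_ij : i j / i <= j.
  move=> W Hi Hj; case: (leqP i j) => [le_ij | /ltnW le_ji]; first exact: W.
  by symmetry; apply: W.
move=> Hi Hj; case: (ltngtP i j) le_ij => // lt_ij _.
have : piter ((j - i - 1).+1 + i) v = Some u by rewrite -Hj; congr piter; lia.
by rewrite piterD Hi => /piter_acyclic.
Qed.

Lemma anc_refl x : anc x x.
Proof. by exists 0. Qed.

Lemma sanc_anc x y : sanc x y -> anc x y.
Proof. by move=> [k Hk]; exists k.+1. Qed.

Lemma anc_trans x y z : anc x y -> anc y z -> anc x z.
Proof. by move=> [i Hi] [j Hj]; exists (i + j); rewrite piterD Hj. Qed.

Lemma anc_sanc_trans x y z : anc x y -> sanc y z -> sanc x z.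
Proof. by move=> [i Hi] [j Hj]; exists (i + j); rewrite -addnS piterD Hj. Qed.

Lemma sanc_anc_trans x y z : sanc x y -> anc y z -> sanc x z.
Proof. by move=> [i Hi] [j Hj]; exists (i + j); rewrite -addSn piterD Hj. Qed.

Lemma sanc_trans x y z : sanc x y -> sanc y z -> sanc x z.
Proof. by move=> sxy /sanc_anc; apply: sanc_anc_trans. Qed.

Lemma sanc_neq x y : sanc x y -> x != y.
Proof. by move=> [k Hk]; apply/eqP=> eq_xy; subst; apply: piter_acyclic Hk. Qed.

Lemma anc_neq_sanc x y : anc x y -> x != y -> sanc x y.
Proof. by move=> [[|k] Hk]; [case: Hk => ->; rewrite eqxx | exists k]. Qed.

Lemma anc_total x y v : anc x v -> anc y v -> anc x y \/ sanc y x.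
Proof.
move=> [i Hi] [j Hj]; case: (leqP j i) => [le_ji|lt_ij].
  by left; exists (i - j); rewrite -Hi -{2}(subnK le_ji) piterD Hj.
right; exists (j - i - 1).
have : piter ((j - i - 1).+1 + i) v = Some y by rewrite -Hj; congr piter; lia.
by rewrite piterD Hi.
Qed.

Lemma lowest_anc (P : T -> Prop) v w : anc w v -> P w ->
  exists u, [/\ anc u v, P u & forall x, sanc u x -> anc x v -> ~ P x].
Proof.
case=> k; elim/ltn_ind: k w => k IH w Hk Pw.
case: (classic (exists x, [/\ sanc w x, anc x v & P x])) => [|none].
  move=> [x [[i Hi] [j Hj] Px]]; apply: (IH j _ x Hj Px).
  have Hw : piter (i.+1 + j) v = Some w by rewrite piterD Hj.
  by rewrite (piter_depth_inj Hk Hw) addSn ltnS leq_addl.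
by exists w; split=> [|//|x swx axv Px]; [exists k | apply: none; exists x].
Qed.

Section Labels.
Variable L : T -> int.
Hypothesis L_inj : injective L.

Local Notation TDM := (TDM parent L).
Local Notation has_pat := (has_pat parent L).
Local Notation ceiling := (ceiling parent L).

Lemma has_pat_sanc u v : has_pat u v -> sanc u v.
Proof.
move=> [v1 [v2 [v3 [v4 [[a1 s12 s23 s34 a4] _]]]]].
have a2v : anc v2 v := anc_trans (sanc_anc (sanc_trans s23 s34)) a4.
exact: anc_sanc_trans a1 (sanc_anc_trans s12 a2v).
Qed.

Lemma lt_above_TDM x y : TDM y -> sanc x y -> (L y < L x)%R.
Proof.
move=> Ty sxy.
by rewrite lt_neqAle (Ty x (sanc_anc sxy)) andbT (inj_eq L_inj) eq_sym sanc_neq.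
Qed.

Lemma ceiling_exists w v : has_pat w v -> exists u, ceiling u v.
Proof.
move=> hp; have awv := sanc_anc (has_pat_sanc hp).
by have [u [auv hpu low]] := lowest_anc (P := has_pat^~ v) awv hp; exists u.
Qed.

Lemma ceiling_TDM u v : ceiling u v -> TDM u.
Proof.
move=> [_ [[v1 [v2 [v3 [v4 [[a1 s12 s23 s34 a4] [T1 nT2 T3 nT4]]]]]] low]].
case: (eqVneq u v1) => [-> // | ne].
have hp1 : has_pat v1 v.
  by exists v1, v2, v3, v4; split; split=> //; apply: anc_refl.
by case: (low v1 (anc_neq_sanc a1 ne) (sanc_anc (has_pat_sanc hp1)) hp1).
Qed.

Lemma ceiling_below w u v : ceiling u v -> has_pat w v -> anc w u.
Proof.
move=> [auv [_ low]] hp; have awv := sanc_anc (has_pat_sanc hp).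
by case: (anc_total awv auv) => // suw; case: (low w suw awv hp).
Qed.

Section Avoid123.
Hypothesis avoid123 : avoids parent L [:: 1; 2; 3].

Lemma lt_below_nonTDM x y : ~ TDM x -> sanc x y -> (L y < L x)%R.
Proof.
move=> nTx sxy.
have [z [azx lt_zx]] : exists z, anc z x /\ (L z < L x)%R.
  apply: NNPP => none; apply: nTx => z azx; rewrite leNgt; apply/negP => lt_zx.
  by apply: none; exists z.
have szx : sanc z x by apply: anc_neq_sanc azx _; rewrite -(inj_eq L_inj) lt_eqF.
case: (ltgtP (L y) (L x)) => // [lt_xy | /L_inj eq_yx].
  case: avoid123; exists (nth x [:: z; x; y]); split; first by case=> [|[|]].
  by move=> i j; do 3?[case: i => [|i]] => //; do 3?[case: j => [|j]] => //= _ _; lia.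
by move: (sanc_neq sxy); rewrite eq_yx eqxx.
Qed.

Lemma has_pat_lt u v :
  avoids parent L [:: 2; 4; 1; 3] -> has_pat u v -> (L v < L u)%R.
Proof.
move=> avoid2413 hp; have suv := has_pat_sanc hp.
case: hp => [v1 [v2 [v3 [v4 [[a1 s12 s23 s34 a4] [_ nT2 T3 _]]]]]].
have su2 : sanc u v2 := anc_sanc_trans a1 s12.
have s3v : sanc v3 v := sanc_anc_trans s34 a4.
have lt_v_v2 := lt_below_nonTDM nT2 (sanc_trans s23 s3v).
have lt_v3_u := lt_above_TDM T3 (sanc_trans su2 s23).
case: (ltgtP (L v) (L u)) => // [lt_uv | /L_inj eq_vu].
  case: avoid2413; exists (nth u [:: u; v2; v3; v]); split.
    by case=> [|[|[|i]]].
  by move=> i j; do 4?[case: i => [|i]] => //; do 4?[case: j => [|j]] => //= _ _; lia.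
by move: (sanc_neq suv); rewrite eq_vu eqxx.
Qed.

Lemma P1_forest_avoids2413 : P1_forest parent L -> avoids parent L [:: 2; 4; 1; 3].
Proof.
move=> P1 [f [sf lf]].
set a := f 0; set b := f 1; set c := f 2; set d := f 3.
have sab : sanc a b := sf 0 erefl.
have sbc : sanc b c := sf 1 erefl.
have scd : sanc c d := sf 2 erefl.
have lt_ca : (L c < L a)%R by rewrite (lf 2 0).
have lt_ad : (L a < L d)%R by rewrite (lf 0 3).
have lt_db : (L d < L b)%R by rewrite (lf 3 1).
have sad : sanc a d := sanc_trans sab (sanc_trans sbc scd).
have Ta : TDM a by apply: NNPP => nTa; have := lt_below_nonTDM nTa sad; lia.
have Tc : TDM c by apply: NNPP => nTc; have := lt_below_nonTDM nTc scd; lia.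
have nTb : ~ TDM b by move=> Tb; have := Tb a (sanc_anc sab); lia.
have nTd : ~ TDM d by move=> Td; have := Td c (sanc_anc scd); lia.
have hp : has_pat a d by exists a, b, c, d; split; split=> //; apply: anc_refl.
have sp : special parent L d.
  by split=> //; exists a, b, c, d; split; split=> //; apply: anc_refl.
have [u ceil] := ceiling_exists hp.
have lt_du := P1 u d sp ceil.
have le_ua := ceiling_TDM ceil (ceiling_below ceil hp).
lia.
Qed.

End Avoid123.
End Labels.
End Forest.

Theorem lemma3p9 (T : finType) (parent : T -> option T) (L : T -> int) :
  is_forest parent -> injective L ->
  avoids parent L [:: 1; 2; 3] ->
  (avoids parent L [:: 2; 4; 1; 3] <-> P1_forest parent L).
Proof.
move=> forest L_inj avoid123; split; last exact: P1_forest_avoids2413.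
by move=> avoid2413 u v _ [_ [hp _]]; apply: has_pat_lt hp.
Qed.
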